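(* For every $N\ge2$, the probability measure $P^{1,N}$ on $\mathbb{R}^2$ with density $\varphi^{1,N}(x)=\pi^{-1}e^{-N|x|^2}\sum_{\ell=0}^{N-1}\frac{(N|x|^2)^\ell}{\ell!}$ is log-concave (i.e. $x\mapsto N|x|^2-\log\sum_{\ell=0}^{N-1}\frac{(N|x|^2)^\ell}{\ell!}$ is convex on $\mathbb{R}^2$), and its second moment equals $\int_{\mathbb{R}^2}|x|^2\,P^{1,N}(\mathrm{d}x)=\frac{N+1}{2N}$.
   Context: $P^{1,N}$ is the one-particle marginal of the complex Ginibre ensemble (the Coulomb gas $P^N$ with $\beta_N=N^2$). *)

From Stdlib Require Import Reals Factorial.
Open Scope R_scope.

Definition sqnorm2 (x1 x2 : R) : R := x1 ^ 2 + x2 ^ 2.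

(* Density phi^{1,N} of the one-particle marginal of the complex Ginibre
   ensemble:  pi^{-1} e^{-N|x|^2} sum_{l=0}^{N-1} (N|x|^2)^l / l!  .
   (sum_f_R0 f (N-1) = f 0 + ... + f (N-1).) *)
Definition phi1N (N : nat) (x1 x2 : R) : R :=
  / PI * exp (- INR N * sqnorm2 x1 x2) *
  sum_f_R0 (fun l => (INR N * sqnorm2 x1 x2) ^ l / INR (fact l)) (N - 1).

Definition convex2 (f : R -> R -> R) : Prop :=
  forall (x1 x2 y1 y2 t : R), 0 <= t <= 1 ->
    f (t * x1 + (1 - t) * y1) (t * x2 + (1 - t) * y2)
    <= t * f x1 x2 + (1 - t) * f y1 y2.

Definition log_concave2 (p : R -> R -> R) : Prop :=
  convex2 (fun x1 x2 => - ln (p x1 x2)).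

Definition improper_int_R (f : R -> R) (l : R) : Prop :=
  (forall a b : R, inhabited (Riemann_integrable f a b)) /\
  forall eps : R, 0 < eps -> exists M : R, forall a b : R,
    a <= - M -> M <= b ->
    forall pr : Riemann_integrable f a b, Rabs (RiemannInt pr - l) < eps.

Definition integral_R2 (f : R -> R -> R) (l : R) : Prop :=
  exists g : R -> R,
    (forall x1 : R, improper_int_R (fun x2 => f x1 x2) (g x1)) /\
    improper_int_R g l.

From Stdlib Require Import Reals.
Open Scope R_scope.
From Stdlib Require Import Factorial Lra Lia.
From Coquelicot Require Import Coquelicot.

(* Log-concavity: [- ln phi(x) = ln PI + h (N |x|^2)] with
   [h u = u - ln (sum_(l<N) u^l / l!)], whose derivative
   [(u^(N-1) / (N-1)!) / sum_(l<N) u^l / l!] is nonnegative and nondecreasing on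
   [0, +oo); a nondecreasing convex function of the convex [N |x|^2] is convex.

   Second moment: expanding [(x1^2 + x2^2)^(l+1)] binomially writes [|x|^2 phi]
   as a finite sum of products [x1^(2i) e^(-N x1^2) * x2^(2j) e^(-N x2^2)].
   Integration by parts reduces the Gaussian moments [m_j] to the Gaussian
   integral, which follows from Feynman's trick: for
   [G x = int_0^x e^(-a s^2) ds] and
   [F x = int_0^1 e^(-a x^2 (1 + t^2)) / (1 + t^2) dt], the function
   [G^2 + F / a] has derivative 0, so [G(+oo)^2 = F(0) / a = PI / (4 a)].
   Finally [sum_i C(k,i) m_i m_(k-i) = k! PI / a^(k+1)] and
   [sum_(l<N) (l+1) / N^2 = (N+1) / (2N)]. *)

(** * Log-concavity *)

Lemma nondecreasing_of_derive_nonneg (f f' : R -> R) (lo : R) :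
  (forall c, lo <= c -> derivable_pt_lim f c (f' c)) ->
  (forall c, lo <= c -> 0 <= f' c) ->
  forall x y, lo <= x <= y -> f x <= f y.
Proof.
  intros Hd Hpos x y Hxy.
  destruct (Req_dec x y) as [->|Hne]; [lra|].
  destruct (MVT_cor2 f f' x y ltac:(lra) (fun c Hc => Hd c ltac:(lra))) as [c [Ec Hc]].
  assert (0 <= f' c * (y - x)) by (apply Rmult_le_pos; [apply Hpos|]; lra).
  lra.
Qed.

Lemma convex_of_derive_nondecreasing (f f' : R -> R) (lo : R) :
  (forall c, lo <= c -> derivable_pt_lim f c (f' c)) ->
  (forall c d, lo <= c <= d -> f' c <= f' d) ->
  forall x y t, lo <= x -> lo <= y -> 0 <= t <= 1 ->
  f (t * x + (1 - t) * y) <= t * f x + (1 - t) * f y.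
Proof.
  intros Hd Hmono.
  (* Mean value theorem on both sides of [z]: the left chord is less steep. *)
  assert (Hlt : forall x y t, lo <= x < y -> 0 < t < 1 ->
            f (t * x + (1 - t) * y) <= t * f x + (1 - t) * f y).
  { intros x y t Hxy Ht. set (z := t * x + (1 - t) * y).
    assert (Hz : x < z < y) by (unfold z; split; nra).
    destruct (MVT_cor2 f f' x z ltac:(lra) (fun c Hc => Hd c ltac:(lra))) as [c1 [E1 Hc1]].
    destruct (MVT_cor2 f f' z y ltac:(lra) (fun c Hc => Hd c ltac:(lra))) as [c2 [E2 Hc2]].
    assert (Hc12 : f' c1 <= f' c2) by (apply Hmono; lra).
    assert (Hw : 0 <= t * (1 - t) * (y - x)) by (apply Rmult_le_pos; nra).
    assert (Ez1 : z - x = (1 - t) * (y - x)) by (unfold z; ring).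
    assert (Ez2 : y - z = t * (y - x)) by (unfold z; ring).
    assert (t * (f z - f x) <= (1 - t) * (f y - f z)); [|lra].
    rewrite E1, E2, Ez1, Ez2.
    replace (t * (f' c1 * ((1 - t) * (y - x)))) with (t * (1 - t) * (y - x) * f' c1) by ring.
    replace ((1 - t) * (f' c2 * (t * (y - x)))) with (t * (1 - t) * (y - x) * f' c2) by ring.
    apply Rmult_le_compat_l; assumption. }
  intros x y t Hx Hy Ht.
  destruct (Req_dec t 0) as [->|Ht0].
  { replace (0 * x + (1 - 0) * y) with y by ring. lra. }
  destruct (Req_dec t 1) as [->|Ht1].
  { replace (1 * x + (1 - 1) * y) with x by ring. lra. }
  destruct (Rtotal_order x y) as [Hxy|[<-|Hyx]].
  - apply Hlt; lra.
  - replace (t * x + (1 - t) * x) with x by ring. lra.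
  - replace (t * x + (1 - t) * y) with ((1 - t) * y + (1 - (1 - t)) * x) by ring.
    assert (H := Hlt y x (1 - t) ltac:(lra) ltac:(lra)). lra.
Qed.

Lemma sqnorm2_nonneg x1 x2 : 0 <= sqnorm2 x1 x2.
Proof. unfold sqnorm2. pose proof (pow2_ge_0 x1). pose proof (pow2_ge_0 x2). lra. Qed.

Lemma convex2_sqnorm2 : convex2 sqnorm2.
Proof.
  intros x1 x2 y1 y2 t Ht.
  assert (E : t * sqnorm2 x1 x2 + (1 - t) * sqnorm2 y1 y2
              - sqnorm2 (t * x1 + (1 - t) * y1) (t * x2 + (1 - t) * y2)
            = t * (1 - t) * sqnorm2 (x1 - y1) (x2 - y2)) by (unfold sqnorm2; ring).
  assert (0 <= t * (1 - t) * sqnorm2 (x1 - y1) (x2 - y2)); [|lra].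
  apply Rmult_le_pos; [nra | apply sqnorm2_nonneg].
Qed.

Lemma convex2_comp_sqnorm2 (h : R -> R) (c : R) : 0 <= c ->
  (forall u v, 0 <= u <= v -> h u <= h v) ->
  (forall u v t, 0 <= u -> 0 <= v -> 0 <= t <= 1 ->
     h (t * u + (1 - t) * v) <= t * h u + (1 - t) * h v) ->
  convex2 (fun x1 x2 => h (c * sqnorm2 x1 x2)).
Proof.
  intros Hc Hmono Hconv x1 x2 y1 y2 t Ht.
  assert (Hx := sqnorm2_nonneg x1 x2). assert (Hy := sqnorm2_nonneg y1 y2).
  assert (Hz := sqnorm2_nonneg (t * x1 + (1 - t) * y1) (t * x2 + (1 - t) * y2)).
  assert (Hsq := convex2_sqnorm2 x1 x2 y1 y2 t Ht).
  apply Rle_trans with (h (t * (c * sqnorm2 x1 x2) + (1 - t) * (c * sqnorm2 y1 y2))).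
  - apply Hmono. split; nra.
  - apply Hconv; nra.
Qed.

Definition exp_taylor (n : nat) (u : R) : R := sum_f_R0 (fun l => u ^ l / INR (fact l)) n.

Lemma exp_taylor_ge_1 n u : 0 <= u -> 1 <= exp_taylor n u.
Proof.
  intros Hu. unfold exp_taylor. induction n as [|n IHn]; [simpl; lra|].
  rewrite tech5.
  assert (0 <= u ^ S n / INR (fact (S n))); [|lra].
  apply Rdiv_le_0_compat; [apply pow_le; auto | apply INR_fact_lt_0].
Qed.

Lemma is_derive_pow_div_fact (n : nat) (u : R) :
  is_derive (fun v => v ^ S n / INR (fact (S n))) u (u ^ n / INR (fact n)).
Proof.
  auto_derive; [trivial|].
  change (match n with 0%nat => 1 | S _ => INR n + 1 end) with (INR (S n)).
  change (fact n + n * fact n)%nat with (fact (S n)). rewrite fact_simpl, mult_INR.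
  pose proof (INR_fact_neq_0 n). assert (INR (S n) <> 0) by (apply not_0_INR; lia).
  field. auto.
Qed.

Lemma is_derive_exp_taylor (n : nat) (u : R) :
  is_derive (exp_taylor n) u (exp_taylor n u - u ^ n / INR (fact n)).
Proof.
  induction n as [|n IHn].
  - apply (is_derive_ext (fun _ => 1)); [intros; unfold exp_taylor; simpl; field|].
    replace (exp_taylor 0 u - u ^ 0 / INR (fact 0)) with 0
      by (unfold exp_taylor; simpl; field).
    apply (is_derive_const (V := R_NormedModule)).
  - apply (is_derive_ext (fun v => exp_taylor n v + v ^ S n / INR (fact (S n))));
      [intros; reflexivity|].
    replace (exp_taylor (S n) u - u ^ S n / INR (fact (S n)))
      with ((exp_taylor n u - u ^ n / INR (fact n)) + u ^ n / INR (fact n))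
      by (unfold exp_taylor; rewrite tech5; ring).
    apply (is_derive_plus (V := R_NormedModule)); [exact IHn | apply is_derive_pow_div_fact].
Qed.

Definition taylor_potential (n : nat) (u : R) : R := u - ln (exp_taylor n u).

Definition taylor_potential_slope (n : nat) (u : R) : R :=
  u ^ n / INR (fact n) / exp_taylor n u.

Lemma derivable_pt_lim_taylor_potential n u :
  0 <= u -> derivable_pt_lim (taylor_potential n) u (taylor_potential_slope n u).
Proof.
  intros Hu. apply is_derive_Reals.
  assert (HS := exp_taylor_ge_1 n u Hu).
  assert (Dln : is_derive ln (exp_taylor n u) (/ exp_taylor n u)).
  { apply is_derive_Reals, derivable_pt_lim_ln. lra. }
  assert (D := is_derive_minus _ _ u _ _ (is_derive_id u)
                 (is_derive_comp ln (exp_taylor n) u _ _ Dln (is_derive_exp_taylor n u))).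
  unfold minus, plus, opp, scal, one in D; simpl in D; unfold mult in D; simpl in D.
  unfold taylor_potential, taylor_potential_slope.
  replace (u ^ n / INR (fact n) / exp_taylor n u)
    with (1 + - ((exp_taylor n u - u ^ n / INR (fact n)) * / exp_taylor n u)); [exact D|].
  pose proof (INR_fact_neq_0 n). field. lra.
Qed.

Lemma taylor_potential_slope_nonneg n u : 0 <= u -> 0 <= taylor_potential_slope n u.
Proof.
  intros Hu. assert (HS := exp_taylor_ge_1 n u Hu).
  apply Rdiv_le_0_compat; [|lra].
  apply Rdiv_le_0_compat; [apply pow_le; auto | apply INR_fact_lt_0].
Qed.

(* Termwise, [u ^ n v ^ l <= v ^ n u ^ l] for [l <= n] and [0 <= u <= v]. *)
Lemma taylor_potential_slope_le n u v :
  0 <= u <= v -> taylor_potential_slope n u <= taylor_potential_slope n v.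
Proof.
  intros Huv.
  assert (Hu := exp_taylor_ge_1 n u ltac:(lra)).
  assert (Hv := exp_taylor_ge_1 n v ltac:(lra)).
  assert (Hf := INR_fact_lt_0 n).
  assert (Hcross : u ^ n * exp_taylor n v <= v ^ n * exp_taylor n u).
  { unfold exp_taylor. rewrite !scal_sum. apply sum_Rle. intros l Hl.
    replace n with (l + (n - l))%nat by lia. rewrite !pow_add.
    assert (0 <= u ^ l) by (apply pow_le; lra).
    assert (u ^ (n - l) <= v ^ (n - l)) by (apply pow_incr; lra).
    assert (0 <= u ^ l * v ^ l / INR (fact l)).
    { apply Rdiv_le_0_compat; [apply Rmult_le_pos; apply pow_le; lra | apply INR_fact_lt_0]. }
    replace (v ^ l / INR (fact l) * (u ^ l * u ^ (n - l)))
      with (u ^ l * v ^ l / INR (fact l) * u ^ (n - l)) by (unfold Rdiv; ring).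
    replace (u ^ l / INR (fact l) * (v ^ l * v ^ (n - l)))
      with (u ^ l * v ^ l / INR (fact l) * v ^ (n - l)) by (unfold Rdiv; ring).
    apply Rmult_le_compat_l; assumption. }
  unfold taylor_potential_slope.
  apply (Rmult_le_reg_r (exp_taylor n u * exp_taylor n v * INR (fact n))).
  { apply Rmult_lt_0_compat; [apply Rmult_lt_0_compat|]; lra. }
  replace (u ^ n / INR (fact n) / exp_taylor n u * (exp_taylor n u * exp_taylor n v * INR (fact n)))
    with (u ^ n * exp_taylor n v) by (field; lra).
  replace (v ^ n / INR (fact n) / exp_taylor n v * (exp_taylor n u * exp_taylor n v * INR (fact n)))
    with (v ^ n * exp_taylor n u) by (field; lra).
  exact Hcross.
Qed.

Lemma neg_ln_phi1N N x1 x2 :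
  - ln (phi1N N x1 x2) = ln PI + taylor_potential (N - 1) (INR N * sqnorm2 x1 x2).
Proof.
  unfold phi1N, taylor_potential. set (u := INR N * sqnorm2 x1 x2).
  fold (exp_taylor (N - 1) u).
  assert (HS : 1 <= exp_taylor (N - 1) u).
  { apply exp_taylor_ge_1. apply Rmult_le_pos; [apply pos_INR | apply sqnorm2_nonneg]. }
  assert (HPI := PI_RGT_0).
  replace (- INR N * sqnorm2 x1 x2) with (- u) by (unfold u; ring).
  rewrite ln_mult, ln_mult, ln_Rinv, ln_exp; try lra;
    auto using Rinv_0_lt_compat, exp_pos, Rmult_lt_0_compat.
Qed.

Lemma log_concave2_phi1N N : log_concave2 (phi1N N).
Proof.
  set (h := taylor_potential (N - 1)).
  assert (Hmono : forall u v, 0 <= u <= v -> h u <= h v).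
  { apply (nondecreasing_of_derive_nonneg _ _ 0 (derivable_pt_lim_taylor_potential (N - 1))).
    apply taylor_potential_slope_nonneg. }
  assert (Hconv := convex_of_derive_nondecreasing _ _ 0
                     (derivable_pt_lim_taylor_potential (N - 1))
                     (taylor_potential_slope_le (N - 1))).
  intros x1 x2 y1 y2 t Ht. rewrite !neg_ln_phi1N.
  assert (H := convex2_comp_sqnorm2 h (INR N) (pos_INR N) Hmono Hconv x1 x2 y1 y2 t Ht).
  unfold h in H. simpl in H. lra.
Qed.

(** * Improper integrals over R *)

(* Coquelicot's [is_RInt_gen] only asks for integrability near the infinite
   ends; [improper_int_R] needs it on every compact interval. *)
Definition is_improper_RInt (f : R -> R) (l : R) : Prop :=
  (forall a b, ex_RInt f a b) /\
  is_RInt_gen f (Rbar_locally m_infty) (Rbar_locally p_infty) l.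

Lemma improper_int_R_of_is_improper_RInt f l :
  is_improper_RInt f l -> improper_int_R f l.
Proof.
  intros [Hint Hlim]. split.
  - intros a b. constructor. apply ex_RInt_Reals_0, Hint.
  - intros eps Heps.
    destruct (Hlim (ball l eps)) as [Qa Qb [Ma HMa] [Mb HMb] HQ].
    { exists (mkposreal eps Heps). auto. }
    exists (Rmax (1 - Ma) (Mb + 1)). intros a b Ha Hb pr.
    pose proof (Rmax_l (1 - Ma) (Mb + 1)). pose proof (Rmax_r (1 - Ma) (Mb + 1)).
    destruct (HQ a b) as [y [Hy Hyl]]; [apply HMa; lra | apply HMb; lra |].
    simpl in Hy. rewrite <- RInt_Reals, (is_RInt_unique _ _ _ _ Hy). exact Hyl.
Qed.

Lemma is_improper_RInt_ext f g l :
  (forall x, f x = g x) -> is_improper_RInt f l -> is_improper_RInt g l.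
Proof.
  intros E [Hint Hlim]. split.
  - intros a b. apply (ex_RInt_ext f); auto.
  - apply (is_RInt_gen_ext f); auto. apply filter_forall. auto.
Qed.

Lemma is_improper_RInt_plus f g lf lg :
  is_improper_RInt f lf -> is_improper_RInt g lg ->
  is_improper_RInt (fun x => f x + g x) (lf + lg).
Proof.
  intros [If Lf] [Ig Lg]. split.
  - intros a b. apply (ex_RInt_plus f g); auto.
  - exact (is_RInt_gen_plus f g lf lg Lf Lg).
Qed.

Lemma is_improper_RInt_scal c f l :
  is_improper_RInt f l -> is_improper_RInt (fun x => c * f x) (c * l).
Proof.
  intros [If Lf]. split.
  - intros a b. apply (ex_RInt_scal f); auto.
  - exact (is_RInt_gen_scal f c l Lf).
Qed.

Lemma is_improper_RInt_sum n (f : nat -> R -> R) (l : nat -> R) :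
  (forall i, (i <= n)%nat -> is_improper_RInt (f i) (l i)) ->
  is_improper_RInt (fun x => sum_f_R0 (fun i => f i x) n) (sum_f_R0 l n).
Proof.
  induction n as [|n IHn]; intros Hf; simpl.
  - apply Hf. lia.
  - apply is_improper_RInt_plus; [apply IHn; intros i Hi|]; apply Hf; lia.
Qed.

Lemma is_improper_RInt_derive (F f : R -> R) (la lb : R) :
  (forall x, is_derive F x (f x)) -> (forall x, continuous f x) ->
  is_lim F m_infty la -> is_lim F p_infty lb ->
  is_improper_RInt f (lb - la).
Proof.
  intros HF Hf Ha Hb.
  assert (EF : forall x, Derive F x = f x) by (intros x; apply is_derive_unique, HF).
  split.
  - intros a b. apply (ex_RInt_continuous (V := R_CompleteNormedModule)). auto.
  - apply (is_RInt_gen_ext (Derive F)).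
    { apply filter_forall. intros ab x _. apply EF. }
    apply is_RInt_gen_Derive; auto; apply filter_forall; intros ab x _.
    + eexists. apply HF.
    + apply (continuous_ext f); auto.
Qed.

Lemma pow_div_fact_le_exp n y : 0 <= y -> y ^ n / INR (fact n) <= exp y.
Proof.
  intros Hy. eapply Rle_trans; [|apply (exp_ge_taylor y n Hy)].
  destruct n as [|n]; [simpl; lra|].
  rewrite tech5.
  assert (0 <= sum_f_R0 (fun k => y ^ k / INR (fact k)) n); [|lra].
  apply cond_pos_sum. intros k.
  apply Rdiv_le_0_compat; [apply pow_le; auto | apply INR_fact_lt_0].
Qed.

(* [exp (c x^2) >= (c x^2)^(k+1) / (k+1)!] beats [|x|^(k+1)]. *)
Lemma pow_mul_gauss_bound k c x : 0 < c -> 1 <= Rabs x ->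
  Rabs (x ^ k * exp (- (c * x ^ 2))) <= INR (fact (S k)) / c ^ S k / Rabs x.
Proof.
  intros Hc Hx. set (y := Rabs x) in *. set (C := INR (fact (S k)) / c ^ S k).
  assert (HC : 0 < C) by (apply Rdiv_lt_0_compat; [apply INR_fact_lt_0 | apply pow_lt; lra]).
  assert (Hx2 : x ^ 2 = y ^ 2) by (unfold y; rewrite pow2_abs; auto).
  assert (Hexp : y ^ (2 * S k) <= C * exp (c * x ^ 2)).
  { rewrite Hx2.
    assert (H := pow_div_fact_le_exp (S k) (c * y ^ 2) ltac:(nra)).
    replace (y ^ (2 * S k)) with (C * ((c * y ^ 2) ^ S k / INR (fact (S k)))).
    - apply Rmult_le_compat_l; lra.
    - unfold C. rewrite Rpow_mult_distr, pow_mult. field.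
      split; [apply INR_fact_neq_0 | apply pow_nonzero; lra]. }
  assert (Hyk : y ^ S k <= y ^ (2 * S k)) by (apply Rle_pow; lia || lra).
  rewrite Rabs_mult, <- RPow_abs, (Rabs_right (exp _)) by (left; apply exp_pos). fold y.
  rewrite exp_Ropp. set (E := exp (c * x ^ 2)) in *.
  assert (0 < E) by apply exp_pos.
  apply Rmult_le_reg_r with (y * E); [nra|].
  replace (y ^ k * / E * (y * E)) with (y ^ S k) by (simpl; field; lra).
  replace (C / y * (y * E)) with (C * E) by (field; lra).
  lra.
Qed.

Lemma pow_mul_gauss_vanishes k c : 0 < c -> forall eps : posreal,
  exists M, forall x, M < Rabs x -> Rabs (x ^ k * exp (- (c * x ^ 2))) < eps.
Proof.
  intros Hc eps. set (C := INR (fact (S k)) / c ^ S k).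
  assert (HC : 0 < C) by (apply Rdiv_lt_0_compat; [apply INR_fact_lt_0 | apply pow_lt; lra]).
  pose proof (cond_pos eps).
  exists (Rmax 1 (C / eps)). intros x Hx.
  pose proof (Rmax_l 1 (C / eps)). pose proof (Rmax_r 1 (C / eps)).
  eapply Rle_lt_trans; [apply pow_mul_gauss_bound; lra|]. fold C.
  assert (C < eps * Rabs x).
  { replace C with (C / eps * eps) by (field; lra). nra. }
  apply (Rmult_lt_reg_r (Rabs x)); [lra|].
  replace (C / Rabs x * Rabs x) with C by (field; lra). lra.
Qed.

Lemma is_lim_pow_mul_gauss_p k c :
  0 < c -> is_lim (fun x => x ^ k * exp (- (c * x ^ 2))) p_infty 0.
Proof.
  intros Hc. apply is_lim_spec. intros eps.
  destruct (pow_mul_gauss_vanishes k c Hc eps) as [M HM].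
  exists (Rabs M). intros x Hx. rewrite Rminus_0_r. apply HM.
  pose proof (Rle_abs M). pose proof (Rle_abs x). lra.
Qed.

Lemma is_lim_pow_mul_gauss_m k c :
  0 < c -> is_lim (fun x => x ^ k * exp (- (c * x ^ 2))) m_infty 0.
Proof.
  intros Hc. apply is_lim_spec. intros eps.
  destruct (pow_mul_gauss_vanishes k c Hc eps) as [M HM].
  exists (- Rabs M). intros x Hx. rewrite Rminus_0_r. apply HM.
  pose proof (Rle_abs M). pose proof (Rabs_maj2 x). lra.
Qed.

(** * The Gaussian integral and its moments *)

Ltac auto_continuous :=
  apply (ex_derive_continuous (K := R_AbsRing) (V := R_NormedModule)); auto_derive.

Section Gaussian.

Variable a : R.
Hypothesis Ha : 0 < a.

Definition gauss (x : R) : R := exp (- (a * x ^ 2)).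

Definition gauss_prim (x : R) : R := RInt gauss 0 x.

Lemma continuous_gauss x : continuous gauss x.
Proof. unfold gauss. auto_continuous. auto. Qed.

Lemma ex_RInt_gauss u v : ex_RInt gauss u v.
Proof.
  apply (ex_RInt_continuous (V := R_CompleteNormedModule)). intros; apply continuous_gauss.
Qed.

Lemma is_derive_gauss_prim x : is_derive gauss_prim x (gauss x).
Proof.
  apply is_derive_RInt with 0.
  - apply filter_forall. intros y.
    apply (RInt_correct (V := R_CompleteNormedModule)), ex_RInt_gauss.
  - apply continuous_gauss.
Qed.

Lemma gauss_prim_0 : gauss_prim 0 = 0.
Proof. apply (RInt_point (V := R_CompleteNormedModule)). Qed.

Definition feynman_integrand (x t : R) : R :=
  exp (- (a * x ^ 2 * (1 + t ^ 2))) / (1 + t ^ 2).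

Definition feynman (x : R) : R := RInt (feynman_integrand x) 0 1.

Lemma is_derive_feynman_integrand x t :
  is_derive (fun u => feynman_integrand u t) x
    (-2 * a * x * exp (- (a * x ^ 2 * (1 + t ^ 2)))).
Proof.
  unfold feynman_integrand. auto_derive; [nra|].
  replace (a * (x * (x * 1)) * (1 + t * (t * 1))) with (a * x ^ 2 * (1 + t ^ 2)) by ring.
  field. nra.
Qed.

Lemma ex_RInt_feynman_integrand x u v : ex_RInt (feynman_integrand x) u v.
Proof.
  apply (ex_RInt_continuous (V := R_CompleteNormedModule)). intros t _.
  unfold feynman_integrand. auto_continuous. nra.
Qed.

Lemma continuity_2d_pt_feynman_derivative x t :
  continuity_2d_pt (fun u v => Derive (fun z => feynman_integrand z v) u) x t.
Proof.
  apply continuity_2d_pt_ext with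
    (fun u v => -2 * a * u * exp (- (a * (u * u) * (1 + v * v)))).
  { intros u v. symmetry. apply is_derive_unique.
    replace (a * (u * u) * (1 + v * v)) with (a * u ^ 2 * (1 + v ^ 2)) by ring.
    apply is_derive_feynman_integrand. }
  repeat first
    [ apply continuity_2d_pt_const | apply continuity_2d_pt_id1
    | apply continuity_2d_pt_id2 | apply continuity_2d_pt_mult
    | apply continuity_2d_pt_plus | apply continuity_2d_pt_opp
    | apply (continuity_1d_2d_pt_comp exp);
      [apply derivable_continuous_pt, derivable_pt_exp|] ].
Qed.

(* The substitution [s = x t] turns the [t]-integral of the [x]-derivative
   into [gauss_prim x]. *)
Lemma is_derive_feynman x : is_derive feynman x (-2 * a * gauss x * gauss_prim x).
Proof.
  assert (Hsub : RInt (fun t => x * gauss (x * t + 0)) 0 1 = gauss_prim x).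
  { transitivity (RInt gauss (x * 0 + 0) (x * 1 + 0)).
    - exact (RInt_comp_lin gauss x 0 0 1 (ex_RInt_gauss _ _)).
    - unfold gauss_prim. f_equal; ring. }
  replace (-2 * a * gauss x * gauss_prim x)
    with (RInt (fun t => Derive (fun u => feynman_integrand u t) x) 0 1).
  { apply is_derive_RInt_param.
    - apply filter_forall. intros y t _. eexists. apply is_derive_feynman_integrand.
    - intros t _. apply continuity_2d_pt_feynman_derivative.
    - apply filter_forall. intros y. apply ex_RInt_feynman_integrand. }
  rewrite <- Hsub.
  rewrite (RInt_ext _ (fun t => (-2 * a * gauss x) * (x * gauss (x * t + 0)))).
  - apply (RInt_scal (V := R_CompleteNormedModule)).
    apply (ex_RInt_continuous (V := R_CompleteNormedModule)). intros t _.
    unfold gauss. auto_continuous. auto.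
  - intros t _. apply is_derive_unique.
    replace (-2 * a * gauss x * (x * gauss (x * t + 0)))
      with (-2 * a * x * exp (- (a * x ^ 2 * (1 + t ^ 2)))).
    + apply is_derive_feynman_integrand.
    + unfold gauss.
      replace (- (a * x ^ 2 * (1 + t ^ 2))) with (- (a * x ^ 2) + - (a * (x * t + 0) ^ 2)) by ring.
      rewrite exp_plus. ring.
Qed.

Lemma feynman_0 : feynman 0 = PI / 4.
Proof.
  unfold feynman.
  rewrite (RInt_ext _ (fun t => / (1 + t ^ 2))).
  2:{ intros t _. unfold feynman_integrand.
      replace (- (a * 0 ^ 2 * (1 + t ^ 2))) with 0 by ring.
      rewrite exp_0. apply Rmult_1_l. }
  assert (I : is_RInt (fun t => / (1 + t ^ 2)) 0 1 (minus (atan 1) (atan 0))).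
  { apply (is_RInt_derive atan).
    - intros t _. rewrite <- Rsqr_pow2. apply is_derive_atan.
    - intros t _. auto_continuous. nra. }
  rewrite (is_RInt_unique _ _ _ _ I), atan_1, atan_0.
  unfold minus, plus, opp; simpl. lra.
Qed.

Lemma feynman_bounds x : 0 <= feynman x <= gauss x.
Proof.
  assert (Hexp_le : forall u v, u <= v -> exp u <= exp v).
  { intros u v [Huv| ->]; [left; apply exp_increasing|right]; auto. }
  unfold feynman. split.
  - apply RInt_ge_0; [lra | apply ex_RInt_feynman_integrand |].
    intros t _. unfold feynman_integrand.
    apply Rdiv_le_0_compat; [left; apply exp_pos | nra].
  - replace (gauss x) with (RInt (fun _ => gauss x) 0 1).
    2:{ rewrite RInt_const. unfold scal; simpl; unfold mult; simpl. ring. }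
    apply RInt_le; [lra | apply ex_RInt_feynman_integrand | apply ex_RInt_const |].
    intros t _. unfold feynman_integrand, gauss.
    assert (exp (- (a * x ^ 2 * (1 + t ^ 2))) <= exp (- (a * x ^ 2))).
    { apply Hexp_le. assert (0 <= a * x ^ 2 * t ^ 2) by (apply Rmult_le_pos; nra). nra. }
    assert (0 < exp (- (a * x ^ 2 * (1 + t ^ 2)))) by apply exp_pos.
    apply Rmult_le_reg_r with (1 + t ^ 2); [nra|].
    unfold Rdiv. rewrite Rmult_assoc, Rinv_l by nra. nra.
Qed.

(* [gauss_prim ^ 2 + feynman / a] has zero derivative. *)
Lemma gauss_prim_sq x : gauss_prim x ^ 2 = PI / (4 * a) - feynman x / a.
Proof.
  set (K := fun y => gauss_prim y ^ 2 + feynman y / a).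
  assert (HK : forall y, is_derive K y zero).
  { intros y. unfold K. auto_derive.
    - split; [eexists; apply is_derive_gauss_prim|].
      split; [eexists; apply is_derive_feynman|]. auto.
    - replace (Derive (fun x => gauss_prim x) y) with (gauss y)
        by (symmetry; apply is_derive_unique, is_derive_gauss_prim).
      replace (Derive (fun x => feynman x) y) with (-2 * a * gauss y * gauss_prim y)
        by (symmetry; apply is_derive_unique, is_derive_feynman).
      unfold zero; simpl. field. lra. }
  assert (HK0 : K x = K 0).
  { destruct (Rtotal_order x 0) as [Hlt|[->|Hgt]].
    - apply (eq_is_derive (V := R_NormedModule)); auto.
    - reflexivity.
    - symmetry. apply (eq_is_derive (V := R_NormedModule)); auto. }
  unfold K in HK0. rewrite gauss_prim_0, feynman_0 in HK0.
  replace (PI / (4 * a)) with (0 ^ 2 + PI / 4 / a) by (field; lra). lra.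
Qed.

Lemma gauss_prim_nonneg x : 0 <= x -> 0 <= gauss_prim x.
Proof.
  intros Hx. apply RInt_ge_0; auto; [apply ex_RInt_gauss|].
  intros; left; apply exp_pos.
Qed.

Lemma gauss_prim_nonpos x : x <= 0 -> gauss_prim x <= 0.
Proof.
  intros Hx. unfold gauss_prim.
  rewrite <- (opp_RInt_swap (V := R_CompleteNormedModule)) by apply ex_RInt_gauss.
  assert (0 <= RInt gauss x 0); [|unfold opp; simpl; lra].
  apply RInt_ge_0; auto; [apply ex_RInt_gauss|].
  intros; left; apply exp_pos.
Qed.

Lemma is_lim_gauss_prim_sq (z : Rbar) :
  is_lim gauss z 0 -> is_lim (fun x => gauss_prim x ^ 2) z (PI / (4 * a)).
Proof.
  intros Hg.
  assert (HF : is_lim feynman z 0).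
  { apply (is_lim_le_le_loc (fun _ => 0) gauss); [| apply is_lim_const | exact Hg].
    apply filter_forall. apply feynman_bounds. }
  apply (is_lim_ext (fun x => PI / (4 * a) - feynman x / a)).
  { intros x. symmetry. apply gauss_prim_sq. }
  assert (H := is_lim_minus' (fun _ => PI / (4 * a)) (fun x => feynman x / a) z _ _
                (is_lim_const _ _) (is_lim_scal_r feynman (/ a) z 0 HF)).
  simpl in H. replace (PI / (4 * a) - 0 * / a) with (PI / (4 * a)) in H by ring.
  exact H.
Qed.

Lemma sqrt_PI_div_4a : sqrt (PI / (4 * a)) = sqrt (PI / a) / 2.
Proof.
  assert (0 < PI / a) by (apply Rdiv_lt_0_compat; [apply PI_RGT_0 | lra]).
  apply sqrt_lem_1.
  - left. apply Rdiv_lt_0_compat; [apply PI_RGT_0 | lra].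
  - assert (0 <= sqrt (PI / a)) by apply sqrt_pos. lra.
  - replace (sqrt (PI / a) / 2 * (sqrt (PI / a) / 2)) with (sqrt (PI / a) * sqrt (PI / a) / 4)
      by field.
    rewrite sqrt_sqrt by lra. field. lra.
Qed.

Lemma continuous_sqrt_PI_div_4a : continuous sqrt (PI / (4 * a)).
Proof.
  apply continuity_pt_filterlim, continuity_pt_sqrt.
  left. apply Rdiv_lt_0_compat; [apply PI_RGT_0 | lra].
Qed.

Lemma is_lim_gauss_p : is_lim gauss p_infty 0.
Proof.
  apply (is_lim_ext (fun x => x ^ 0 * gauss x)); [intros x; simpl; ring|].
  apply is_lim_pow_mul_gauss_p, Ha.
Qed.

Lemma is_lim_gauss_m : is_lim gauss m_infty 0.
Proof.
  apply (is_lim_ext (fun x => x ^ 0 * gauss x)); [intros x; simpl; ring|].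
  apply is_lim_pow_mul_gauss_m, Ha.
Qed.

(* [gauss_prim] is the nonnegative square root of [gauss_prim ^ 2] on [0, +oo)
   and the nonpositive one on (-oo, 0]. *)
Lemma is_lim_gauss_prim_p : is_lim gauss_prim p_infty (sqrt (PI / a) / 2).
Proof.
  apply (is_lim_ext_loc (fun x => sqrt (gauss_prim x ^ 2))).
  { exists 0. intros x Hx. apply sqrt_pow2, gauss_prim_nonneg. lra. }
  rewrite <- sqrt_PI_div_4a.
  apply is_lim_comp_continuous; [|apply continuous_sqrt_PI_div_4a].
  apply is_lim_gauss_prim_sq, is_lim_gauss_p.
Qed.

Lemma is_lim_gauss_prim_m : is_lim gauss_prim m_infty (- (sqrt (PI / a) / 2)).
Proof.
  apply (is_lim_ext_loc (fun x => - sqrt (gauss_prim x ^ 2))).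
  { exists 0. intros x Hx.
    replace (gauss_prim x ^ 2) with ((- gauss_prim x) ^ 2) by ring.
    rewrite sqrt_pow2; [ring|]. pose proof (gauss_prim_nonpos x). lra. }
  rewrite <- sqrt_PI_div_4a.
  apply (is_lim_opp _ _ (sqrt (PI / (4 * a)))).
  apply is_lim_comp_continuous; [|apply continuous_sqrt_PI_div_4a].
  apply is_lim_gauss_prim_sq, is_lim_gauss_m.
Qed.

Lemma is_improper_RInt_gauss : is_improper_RInt gauss (sqrt (PI / a)).
Proof.
  replace (sqrt (PI / a)) with (sqrt (PI / a) / 2 - - (sqrt (PI / a) / 2)) by field.
  apply (is_improper_RInt_derive gauss_prim).
  - apply is_derive_gauss_prim.
  - apply continuous_gauss.
  - apply is_lim_gauss_prim_m.
  - apply is_lim_gauss_prim_p.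
Qed.

Definition gauss_moment_fun (j : nat) (x : R) : R := x ^ (2 * j) * gauss x.

Definition gauss_by_parts (j : nat) (x : R) : R := - / (2 * a) * (x ^ (2 * j + 1) * gauss x).

Lemma is_derive_gauss_by_parts j x :
  is_derive (gauss_by_parts j) x
    (gauss_moment_fun (S j) x - (2 * INR j + 1) / (2 * a) * gauss_moment_fun j x).
Proof.
  unfold gauss_by_parts, gauss_moment_fun, gauss. auto_derive; [trivial|].
  replace (j + (j + 0) + 1)%nat with (S (2 * j)) by lia.
  replace (2 * S j)%nat with (S (S (2 * j))) by lia.
  replace (x * (x * 1)) with (x ^ 2) by ring.
  rewrite S_INR, mult_INR. simpl pred.
  change (x ^ S (S (2 * j))) with (x * (x * x ^ (2 * j))).
  change (x ^ S (2 * j)) with (x * x ^ (2 * j)).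
  change (j + (j + 0))%nat with (2 * j)%nat. simpl INR. field. lra.
Qed.

Lemma is_lim_gauss_by_parts_p j : is_lim (gauss_by_parts j) p_infty 0.
Proof.
  assert (H := is_lim_scal_l _ (- / (2 * a)) _ _ (is_lim_pow_mul_gauss_p (2 * j + 1) a Ha)).
  simpl in H. rewrite Rmult_0_r in H. exact H.
Qed.

Lemma is_lim_gauss_by_parts_m j : is_lim (gauss_by_parts j) m_infty 0.
Proof.
  assert (H := is_lim_scal_l _ (- / (2 * a)) _ _ (is_lim_pow_mul_gauss_m (2 * j + 1) a Ha)).
  simpl in H. rewrite Rmult_0_r in H. exact H.
Qed.

Fixpoint gauss_moment (j : nat) : R :=
  match j with
  | O => sqrt (PI / a)
  | S k => (2 * INR k + 1) / (2 * a) * gauss_moment k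
  end.

Lemma is_improper_RInt_gauss_moment_fun j : is_improper_RInt (gauss_moment_fun j) (gauss_moment j).
Proof.
  induction j as [|j IH]; simpl.
  - apply (is_improper_RInt_ext gauss); [intros x; unfold gauss_moment_fun; simpl; ring|].
    apply is_improper_RInt_gauss.
  - set (q := (2 * INR j + 1) / (2 * a)).
    apply (is_improper_RInt_ext (fun x =>
      (gauss_moment_fun (S j) x - q * gauss_moment_fun j x) + q * gauss_moment_fun j x));
      [intros; ring|].
    replace (q * gauss_moment j) with ((0 - 0) + q * gauss_moment j) by ring.
    apply is_improper_RInt_plus; [|apply is_improper_RInt_scal, IH].
    apply (is_improper_RInt_derive (gauss_by_parts j)).
    + apply is_derive_gauss_by_parts.
    + intros x. unfold gauss_moment_fun, gauss. auto_continuous. auto.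
    + apply is_lim_gauss_by_parts_m.
    + apply is_lim_gauss_by_parts_p.
Qed.

End Gaussian.

(** * The second moment *)

Lemma sum_f_R0_rev (F : nat -> R) n : sum_f_R0 F n = sum_f_R0 (fun i => F (n - i)%nat) n.
Proof.
  revert F. induction n as [|n IHn]; intros F; [reflexivity|].
  rewrite (decomp_sum (fun i => F (S n - i)%nat)) by lia. simpl pred.
  rewrite tech5, (IHn F), Rplus_comm. f_equal.
Qed.

Section MomentConvolution.

Variable a : R.
Hypothesis Ha : 0 < a.

Definition scaled_moment (i : nat) : R := gauss_moment a i / INR (fact i).

Definition moment_conv (k : nat) : R :=
  sum_f_R0 (fun i => scaled_moment i * scaled_moment (k - i)) k.

Definition moment_conv_weighted (k : nat) : R :=
  sum_f_R0 (fun i => INR i * scaled_moment i * scaled_moment (k - i)) k.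

Lemma scaled_moment_S i :
  2 * a * INR (S i) * scaled_moment (S i) = (2 * INR i + 1) * scaled_moment i.
Proof.
  unfold scaled_moment. simpl gauss_moment. rewrite fact_simpl, mult_INR.
  assert (0 < INR (fact i)) by apply INR_fact_lt_0.
  assert (0 < INR (S i)) by (apply lt_0_INR; lia).
  field. lra.
Qed.

Lemma moment_conv_weighted_sym k : 2 * moment_conv_weighted k = INR k * moment_conv k.
Proof.
  assert (Erev : moment_conv_weighted k =
            sum_f_R0 (fun i => (INR k - INR i) * scaled_moment i * scaled_moment (k - i)) k).
  { unfold moment_conv_weighted. rewrite sum_f_R0_rev. apply sum_eq. intros i Hi.
    replace (k - (k - i))%nat with i by lia. rewrite minus_INR by lia. ring. }
  unfold moment_conv. rewrite scal_sum.
  replace (2 * moment_conv_weighted k) with (moment_conv_weighted k + moment_conv_weighted k)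
    by ring.
  rewrite Erev at 2. unfold moment_conv_weighted. rewrite <- plus_sum.
  apply sum_eq. intros i _. ring.
Qed.

Lemma moment_conv_weighted_S k :
  2 * a * moment_conv_weighted (S k) = (INR k + 1) * moment_conv k.
Proof.
  unfold moment_conv_weighted. rewrite decomp_sum by lia. simpl pred.
  rewrite Rmult_0_l, Rmult_0_l, Rplus_0_l, scal_sum.
  replace ((INR k + 1) * moment_conv k) with (2 * moment_conv_weighted k + moment_conv k)
    by (rewrite moment_conv_weighted_sym; ring).
  unfold moment_conv_weighted, moment_conv. rewrite scal_sum, <- plus_sum.
  apply sum_eq. intros i Hi. replace (S k - S i)%nat with (k - i)%nat by lia.
  replace (INR (S i) * scaled_moment (S i) * scaled_moment (k - i) * (2 * a))
    with (2 * a * INR (S i) * scaled_moment (S i) * scaled_moment (k - i)) by ring.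
  rewrite scaled_moment_S. ring.
Qed.

(* Coefficientwise form of [(1 - z / a) f(z)^2 = PI / a], where
   [f(z) = sum_i scaled_moment i z^i = sqrt (PI / a) (1 - z / a)^(-1/2)]. *)
Lemma moment_conv_S k : a * moment_conv (S k) = moment_conv k.
Proof.
  assert (Hk : 0 < INR k + 1) by (pose proof (pos_INR k); lra).
  apply (Rmult_eq_reg_l (INR k + 1)); [|lra].
  rewrite <- moment_conv_weighted_S, <- S_INR.
  replace (2 * a * moment_conv_weighted (S k)) with (a * (2 * moment_conv_weighted (S k)))
    by ring.
  rewrite moment_conv_weighted_sym. ring.
Qed.

Lemma moment_conv_closed k : moment_conv k = PI / a / a ^ k.
Proof.
  induction k as [|k IHk].
  - unfold moment_conv, scaled_moment. simpl. rewrite !Rdiv_1_r.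
    apply sqrt_sqrt. left. apply Rdiv_lt_0_compat; [apply PI_RGT_0 | lra].
  - assert (a ^ k <> 0) by (apply pow_nonzero; lra).
    apply (Rmult_eq_reg_l a); [|lra]. rewrite moment_conv_S, IHk. simpl. field.
    split; auto; lra.
Qed.

Lemma sum_binomial_gauss_moment k :
  sum_f_R0 (fun i => Binomial.C k i * gauss_moment a i * gauss_moment a (k - i)) k =
  INR (fact k) / a ^ k * (PI / a).
Proof.
  transitivity (INR (fact k) * moment_conv k).
  - unfold moment_conv. rewrite scal_sum. apply sum_eq. intros i Hi.
    unfold Binomial.C, scaled_moment.
    assert (0 < INR (fact i)) by apply INR_fact_lt_0.
    assert (0 < INR (fact (k - i))) by apply INR_fact_lt_0.
    field. lra.
  - assert (a ^ k <> 0) by (apply pow_nonzero; lra).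
    rewrite moment_conv_closed. field. split; auto; lra.
Qed.

End MomentConvolution.

Lemma integral_R2_double_sum_prod (h : R -> R -> R) (n : nat) (m : nat -> nat)
    (c : nat -> nat -> R) (f g : nat -> nat -> R -> R) (F G : nat -> nat -> R) :
  (forall x1 x2, h x1 x2 =
     sum_f_R0 (fun l => sum_f_R0 (fun i => c l i * f l i x1 * g l i x2) (m l)) n) ->
  (forall l i, is_improper_RInt (f l i) (F l i)) ->
  (forall l i, is_improper_RInt (g l i) (G l i)) ->
  integral_R2 h (sum_f_R0 (fun l => sum_f_R0 (fun i => c l i * F l i * G l i) (m l)) n).
Proof.
  intros Eh Hf Hg.
  exists (fun x1 => sum_f_R0 (fun l => sum_f_R0 (fun i => c l i * G l i * f l i x1) (m l)) n).
  split.
  - intros x1. apply improper_int_R_of_is_improper_RInt.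
    apply (is_improper_RInt_ext (fun x2 =>
      sum_f_R0 (fun l => sum_f_R0 (fun i => c l i * f l i x1 * g l i x2) (m l)) n)).
    { intros x2. rewrite Eh. apply sum_eq. intros. apply sum_eq. intros. ring. }
    replace (sum_f_R0 (fun l => sum_f_R0 (fun i => c l i * G l i * f l i x1) (m l)) n)
      with (sum_f_R0 (fun l => sum_f_R0 (fun i => c l i * f l i x1 * G l i) (m l)) n)
      by (apply sum_eq; intros; apply sum_eq; intros; ring).
    apply is_improper_RInt_sum. intros l _. apply is_improper_RInt_sum. intros i _.
    apply is_improper_RInt_scal, Hg.
  - apply improper_int_R_of_is_improper_RInt.
    replace (sum_f_R0 (fun l => sum_f_R0 (fun i => c l i * F l i * G l i) (m l)) n)
      with (sum_f_R0 (fun l => sum_f_R0 (fun i => c l i * G l i * F l i) (m l)) n)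
      by (apply sum_eq; intros; apply sum_eq; intros; ring).
    apply is_improper_RInt_sum. intros l _. apply is_improper_RInt_sum. intros i _.
    apply is_improper_RInt_scal, Hf.
Qed.

Lemma sqnorm2_mul_phi1N N x1 x2 :
  sqnorm2 x1 x2 * phi1N N x1 x2 =
  sum_f_R0 (fun l => sum_f_R0 (fun i =>
    / PI * INR N ^ l / INR (fact l) * Binomial.C (S l) i *
    gauss_moment_fun (INR N) i x1 * gauss_moment_fun (INR N) (S l - i) x2) (S l)) (N - 1).
Proof.
  unfold phi1N. set (a := INR N). set (q := sqnorm2 x1 x2).
  rewrite !Rmult_assoc, !scal_sum. apply sum_eq. intros l _.
  transitivity (/ PI * a ^ l / INR (fact l) *
                (exp (- (a * x1 ^ 2)) * exp (- (a * x2 ^ 2))) * q ^ S l).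
  { rewrite <- exp_plus, Rpow_mult_distr.
    replace (- (a * x1 ^ 2) + - (a * x2 ^ 2)) with (- a * q) by (unfold q, sqnorm2; ring).
    simpl (q ^ S l). field. split; [apply PI_neq0 | apply INR_fact_neq_0]. }
  unfold q, sqnorm2. rewrite binomial, scal_sum. apply sum_eq. intros i _.
  unfold gauss_moment_fun, gauss. rewrite !pow_mult. ring.
Qed.

Lemma sum_f_R0_INR_S n : sum_f_R0 (fun l => INR (S l)) n = (INR n + 1) * (INR n + 2) / 2.
Proof.
  induction n as [|n IHn]; [simpl; field|].
  rewrite tech5, IHn, !S_INR. field.
Qed.

Lemma integral_R2_sqnorm2_phi1N N : (1 <= N)%nat ->
  integral_R2 (fun x1 x2 => sqnorm2 x1 x2 * phi1N N x1 x2) ((INR N + 1) / (2 * INR N)).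
Proof.
  intros HN. set (a := INR N).
  assert (Ha : 0 < a) by (apply lt_0_INR; lia).
  set (c := fun l i => / PI * a ^ l / INR (fact l) * Binomial.C (S l) i).
  replace ((a + 1) / (2 * a)) with (sum_f_R0 (fun l => sum_f_R0 (fun i =>
      c l i * gauss_moment a i * gauss_moment a (S l - i)) (S l)) (N - 1)).
  - apply (integral_R2_double_sum_prod _ (N - 1) S c
             (fun _ i => gauss_moment_fun a i) (fun l i => gauss_moment_fun a (S l - i))).
    + apply sqnorm2_mul_phi1N.
    + intros; apply is_improper_RInt_gauss_moment_fun, Ha.
    + intros; apply is_improper_RInt_gauss_moment_fun, Ha.
  - transitivity (sum_f_R0 (fun l => INR (S l) / (a * a)) (N - 1)).
    + apply sum_eq. intros l _. unfold c.
      transitivity (/ PI * a ^ l / INR (fact l) * sum_f_R0 (fun i =>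
        Binomial.C (S l) i * gauss_moment a i * gauss_moment a (S l - i)) (S l)).
      { rewrite scal_sum. apply sum_eq. intros. ring. }
      rewrite sum_binomial_gauss_moment by exact Ha.
      rewrite fact_simpl, mult_INR. simpl (a ^ S l).
      assert (a ^ l <> 0) by (apply pow_nonzero; lra).
      pose proof (INR_fact_neq_0 l). pose proof PI_neq0.
      field. repeat split; auto; lra.
    + unfold Rdiv at 1. rewrite <- scal_sum, Rmult_comm, sum_f_R0_INR_S.
      replace (INR (N - 1)) with (a - 1) by (unfold a; rewrite minus_INR by lia; simpl; ring).
      field. lra.
Qed.

Theorem mainTheorem14 (N : nat) (HN : (2 <= N)%nat) :
  log_concave2 (phi1N N) /\
  integral_R2 (fun x1 x2 => sqnorm2 x1 x2 * phi1N N x1 x2)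
              ((INR N + 1) / (2 * INR N)).
Proof.
  split.
  - apply log_concave2_phi1N.
  - apply integral_R2_sqnorm2_phi1N. lia.
Qed.
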